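(* The map $\eta:\mathbf{T}_b\to\mathbf{F}$ is a bijection, and for all $t_1,t_2\in\mathbf{T}_b$: $t_1\leq t_2$ in the Tamari order if and only if $\eta(t_1)\leq\eta(t_2)$ in $\mathbf{F}$. In other words, $\eta$ is a poset isomorphism.
   Context: $\mathbf{T}_b$ is the set of planar binary trees, defined recursively: the single leaf $|$ is a planar binary tree, and if $t_1,t_2$ are planar binary trees then so is $t_1\vee t_2$ (grafting $t_1,t_2$ as left and right subtrees on a new root). The Tamari order $\leq$ on $\mathbf{T}_b$ is the reflexive-transitive closure of the relation $t\to t'$, where $t'$ is obtained from $t$ by replacing one subtree of the form $(a\vee b)\vee c$ by $a\vee(b\vee c)$. Planar rooted trees have their children linearly ordered left to right; $\mathbf{F}$ is the set of planar forests (finite, possibly empty, sequences $t_1\cdots t_n$ of planar rooted trees; $1$ = empty forest; product = concatenation). $B^+(F)$ is the tree obtained by grafting the trees of $F$ (in order) on a new common root. $\eta$ is defined recursively by $\eta(|)=1$, $\eta(t_1\vee t_2)=B^+(\eta(t_1))\,\eta(t_2)$. Order on $\mathbf{F}$: on vertices, $s\geq_{high}s'$ iff $s'=s$ or $s'$ is an ancestor of $s$; for $\geq_{high}$-incomparable $s,s'$, $s\geq_{left}s'$ iff $s\in t_i,s'\in t_j$ with $i<j$, or both lie in $t_i$ and $s\geq_{left}s'$ in the forest obtained from $t_i$ by deleting its root (recursively). An admissible transformation of a forest: choose a vertex $s$ which is the leftmost child of its parent $u$; if $u$ is not a root, with parent $r$, move the subtree rooted at $s$ to become a child of $r$ immediately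 to the left of $u$; if $u$ is a root, move the subtree rooted at $s$ to become a new tree immediately to the left of the tree of $u$; everything else unchanged. $F\leq G$ iff $G$ is obtained from $F$ by a finite (possibly empty) sequence of admissible transformations. *)

From Stdlib Require Import List Relations.
From Corelib Require Import ssreflect ssrfun.
Import ListNotations.

Inductive btree : Type :=
| Leaf : btree
| Node : btree -> btree -> btree.   (* Node t1 t2 = t1 \/ t2 *)

Inductive tamari_step : btree -> btree -> Prop :=
| ts_root a b c : tamari_step (Node (Node a b) c) (Node a (Node b c))
| ts_left l l' r : tamari_step l l' -> tamari_step (Node l r) (Node l' r)
| ts_right l r r' : tamari_step r r' -> tamari_step (Node l r) (Node l r').

Definition tamari_le : btree -> btree -> Prop := clos_refl_trans btree tamari_step.

(* Planar rooted trees (children ordered left to right) and planar forests. *)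
Inductive ptree : Type :=
| PNode : list ptree -> ptree.   (* PNode F = B^+(F) *)

Definition forest := list ptree.

(* Admissible transformations.  fs_root: s is the leftmost child of a root u;
   s becomes a new tree immediately left of u's tree.  fs_deep: the
   transformation happens inside the children-forest of some vertex r of the
   forest; in particular, when in that children-forest the root case is
   applied, s (leftmost child of u, u child of r) becomes a child of r
   immediately to the left of u. *)
Inductive forest_step : forest -> forest -> Prop :=
| fs_root (pre : forest) (s : ptree) (cs post : forest) :
    forest_step (pre ++ PNode (s :: cs) :: post) (pre ++ s :: PNode cs :: post)
| fs_deep (pre f f' post : forest) :
    forest_step f f' ->
    forest_step (pre ++ PNode f :: post) (pre ++ PNode f' :: post).

Definition forest_le : forest -> forest -> Prop := clos_refl_trans forest forest_step.

Fixpoint eta (t : btree) : forest :=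
  match t with
  | Leaf => []
  | Node t1 t2 => PNode (eta t1) :: eta t2
  end.

(* A binary tree is the same as a forest read along its right spine: the left
   subtrees hanging off the spine become the trees of the forest.  Under this
   dictionary the rotation (a \/ b) \/ c -> a \/ (b \/ c) at the top of the spine
   is exactly the admissible transformation at a root, and a rotation inside a
   left subtree is a transformation inside the corresponding tree.  So eta maps
   Tamari moves onto admissible transformations and every admissible
   transformation of eta t comes from a Tamari move of t; as eta is bijective,
   the two reflexive-transitive closures correspond. *)
From Stdlib Require Import List Relations.
From Corelib Require Import ssreflect ssrfun.
Import ListNotations.

Section ClosureTransport.

Variables (A B : Type) (R : relation A) (S : relation B) (f : A -> B).

Lemma clos_rt_map :
  (forall x y, R x y -> S (f x) (f y)) ->
  forall x y, clos_refl_trans A R x y -> clos_refl_trans B S (f x) (f y).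
Proof.
move=> RS x y; elim=> [u v /RS|u|u v w _ IHuv _ IHvw].
- exact: rt_step.
- exact: rt_refl.
- exact: rt_trans IHuv IHvw.
Qed.

Lemma clos_rt_reflect :
  injective f ->
  (forall x v, S (f x) v -> exists y, v = f y /\ R x y) ->
  forall x y, clos_refl_trans B S (f x) (f y) -> clos_refl_trans A R x y.
Proof.
move=> f_inj SR x y Hxy.
have chain u v : clos_refl_trans_1n B S u v ->
    forall x y, u = f x -> v = f y -> clos_refl_trans A R x y.
{ elim=> [w|u' w v' Suw _ IH] x' y' Eu Ev.
  - by rewrite (f_inj x' y' (etrans (esym Eu) Ev)); exact: rt_refl.
  - move: Suw; rewrite Eu => /SR [z [Ew Rxz]].
    exact: rt_trans (rt_step _ _ _ _ Rxz) (IH z y' Ew Ev). }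
exact: chain (clos_rt_rt1n _ _ _ _ Hxy) x y erefl erefl.
Qed.

End ClosureTransport.

Fixpoint graft (p : ptree) (r : btree) : btree :=
  match p with PNode g => Node (fold_right graft Leaf g) r end.

Definition eta_inv (f : forest) : btree := fold_right graft Leaf f.

Lemma forest_ind (P : forest -> Prop) :
  P [] -> (forall g r, P g -> P r -> P (PNode g :: r)) -> forall f, P f.
Proof.
move=> Pnil Pcons f.
suff IH : forall p, let: PNode g := p in P g by exact: IH (PNode f).
fix IH 1; case; fix IHl 1; case=> [|p r]; first exact: Pnil.
by move: (IH p); case: p => g Pg; exact: Pcons Pg (IHl r).
Qed.

Lemma eta_invK : cancel eta eta_inv.
Proof. by elim=> // a IHa b IHb; rewrite -{2}IHa -{2}IHb. Qed.

Lemma etaK : cancel eta_inv eta.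
Proof. by elim/forest_ind=> // g r IHg IHr; rewrite -{2}IHg -{2}IHr. Qed.

Lemma forest_step_app_l pre f f' :
  forest_step f f' -> forest_step (pre ++ f) (pre ++ f').
Proof.
case=> [pre' s cs post|pre' g g' post Hg]; rewrite !app_assoc.
- exact: fs_root.
- exact: fs_deep.
Qed.

Lemma tamari_step_eta t t' : tamari_step t t' -> forest_step (eta t) (eta t').
Proof.
elim=> /= [a b c|l l' r _ IH|l r r' _ IH].
- exact: (fs_root [] (PNode (eta a)) (eta b) (eta c)).
- exact: (fs_deep [] _ _ (eta r) IH).
- exact: (forest_step_app_l [PNode (eta l)]).
Qed.

(* A step acting behind a prefix of the forest eta t acts on the right spine of t. *)
Lemma eta_step_app_l pre F G t :
  (forall u, F = eta u -> exists u', G = eta u' /\ tamari_step u u') ->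
  pre ++ F = eta t -> exists t', pre ++ G = eta t' /\ tamari_step t t'.
Proof.
move=> FG; elim: pre t => [|p pre IH] t; first exact: FG.
case: t => //= t1 t2 [Ep Et].
have [t2' [-> H]] := IH t2 Et.
by exists (Node t1 t2'); split; [rewrite Ep | constructor].
Qed.

Lemma forest_step_eta t G :
  forest_step (eta t) G -> exists t', G = eta t' /\ tamari_step t t'.
Proof.
have reflect_step F G' : forest_step F G' ->
    forall u, F = eta u -> exists u', G' = eta u' /\ tamari_step u u'.
{ elim=> [pre s cs post|pre g g' post _ IH] u Eu; apply: (eta_step_app_l _ _ _ _ _ Eu).
  - move=> [|[|a b] c] //= [Es Ecs Epost].
    exists (Node a (Node b c)); split; last exact: ts_root.
    by rewrite Es Ecs Epost.
  - move=> [|t1 t2] //= [Eg Epost].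
    have [t1' [-> H]] := IH t1 Eg.
    by exists (Node t1' t2); split; [rewrite Epost | exact: ts_left]. }
by move=> H; exact: reflect_step H t erefl.
Qed.

Theorem theorem31 :
  bijective eta /\
  (forall t1 t2 : btree, tamari_le t1 t2 <-> forest_le (eta t1) (eta t2)).
Proof.
split; first exact: Bijective eta_invK etaK.
move=> t1 t2; split.
- exact: clos_rt_map tamari_step_eta t1 t2.
- apply: clos_rt_reflect; first exact: can_inj eta_invK.
  exact: forest_step_eta.
Qed.
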